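(* Let $s\geq2$, and define $f_s:\mathrm{Aut}_{s-1}(H)\to k^{\mathbb{Z}}$ by $f_s(\phi)=(\beta_n)_{n\in\mathbb{Z}}$ where $\phi(x^ny^s)=x^ny^s+\beta_n(x^{n+s}-x^n)$ for all $n\in\mathbb{Z}$. Then $f_s$ is a group homomorphism (into the additive group $k^{\mathbb{Z}}$) with $\mathrm{Ker}(f_s)=\mathrm{Aut}_s(H)$.
   Context: Let $k$ be a field and $0\neq q\in k$ not a root of unity. $H=k_q[x,x^{-1},y]$ is the $k$-algebra generated by $x,x^{-1},y$ with $xx^{-1}=x^{-1}x=1$, $yx=qxy$, a Hopf algebra with $\Delta(x)=x\otimes x$, $\Delta(y)=y\otimes x+1\otimes y$, $\varepsilon(x)=1$, $\varepsilon(y)=0$; $\{x^ny^m:n\in\mathbb{Z},m\in\mathbb{N}\}$ is a $k$-basis. $H_0=\mathrm{span}\{x^n\}$, $H(m)=H_0y^m$. $\mathrm{Aut}_c(H)$ is the group under composition of coalgebra automorphisms of $H$, and for $m\geq1$, $\mathrm{Aut}_m(H)=\{\phi\in\mathrm{Aut}_c(H):\phi(h)=h\text{ for all }h\in\sum_{i=0}^mH(i)\}$. $k^{\mathbb{Z}}$ is the group of sequences in $k$ under componentwise addition. It is a fact (proved in the paper) that for every $\phi\in\mathrm{Aut}_{s-1}(H)$ there is a unique $(\beta_n)_n\in k^{\mathbb{Z}}$ with $\phi(x^ny^s)=x^ny^s+\beta_n(x^{n+s}-x^n)$ for all $n$, so $f_s$ is well defined. *)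

From HB Require Import structures.
From mathcomp Require Import all_boot all_order all_algebra.
From mathcomp Require Import finmap.
From mathcomp.multinomials Require Import monalg.

Set Implicit Arguments.
Unset Strict Implicit.
Unset Printing Implicit Defensive.

Import Order.TTheory GRing.Theory Num.Theory.
Local Open Scope ring_scope.

(* The underlying vector space of H = k_q[x,x^-1,y]: the basis element
   x^n y^m is the index (n, m) : int * nat. *)
Definition HH (k : fieldType) := {malg k[(int * nat)%type]}.
(* H (x) H, with basis x^a y^b (x) x^c y^d indexed by ((a,b),(c,d)). *)
Definition HT (k : fieldType) := {malg k[((int * nat) * (int * nat))%type]}.

Definition mono (k : fieldType) (n : int) (m : nat) : HH k := << (n, m) >>.

Fixpoint qbin (k : fieldType) (q : k) (m i : nat) : k :=
  match m, i with
  | 0, 0 => 1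
  | 0, _.+1 => 0
  | _.+1, 0 => 1
  | m'.+1, i'.+1 => q ^+ (m' - i') * qbin q m' i' + qbin q m' i'.+1
  end.

(* Delta(x^n y^m) = (x(x)x)^n (y(x)x + 1(x)y)^m
                  = sum_{i=0}^m [m choose i]_q  x^n y^i (x) x^(n+i) y^(m-i),
   using (1(x)y)(y(x)x) = q (y(x)x)(1(x)y) since yx = qxy. *)
Definition comul_mono (k : fieldType) (q : k) (p : int * nat) : HT k :=
  \sum_(i < p.2.+1)
     << qbin q p.2 i *g ((p.1, (i : nat)), (p.1 + (i : nat)%:Z, (p.2 - i)%N)) >>.

Definition comul (k : fieldType) (q : k) (v : HH k) : HT k :=
  \sum_(p <- msupp v) v@_p *: comul_mono q p.

Definition counit (k : fieldType) (v : HH k) : k :=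
  \sum_(p <- msupp v | p.2 == 0%N) v@_p.

Definition tens (k : fieldType) (u v : HH k) : HT k :=
  \sum_(a <- msupp u) \sum_(b <- msupp v) << u@_a * v@_b *g (a, b) >>.

Definition tmap (k : fieldType) (phi : HH k -> HH k) (w : HT k) : HT k :=
  \sum_(p <- msupp w) w@_p *: tens (phi << p.1 >>) (phi << p.2 >>).

Definition is_coalg_aut (k : fieldType) (q : k) (phi : HH k -> HH k) : Prop :=
  [/\ (forall u v, phi (u + v) = phi u + phi v),
      (forall (a : k) u, phi (a *: u) = a *: phi u),
      bijective phi,
      (forall h, comul q (phi h) = tmap phi (comul q h)) &
      (forall h, counit (phi h) = counit h)].

Definition in_Hle (k : fieldType) (m : nat) (h : HH k) : Prop :=
  forall p, p \in msupp h -> (p.2 <= m)%N.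

Definition is_Aut_m (k : fieldType) (q : k) (m : nat) (phi : HH k -> HH k) :=
  is_coalg_aut q phi /\ (forall h, in_Hle m h -> phi h = h).

From HB Require Import structures.
From mathcomp Require Import all_boot all_order all_algebra.
From mathcomp Require Import finmap.
From mathcomp.multinomials Require Import monalg.
Import Order.TTheory GRing.Theory Num.Theory.
Local Open Scope ring_scope.
Set Implicit Arguments.
Unset Strict Implicit.

(* Aut_{s-1}(H) is closed under composition; for the comultiplication this is
   (phi (x) phi) (psi (x) psi) = phi psi (x) phi psi, which follows from the
   bilinearity of (x). For phi, psi in Aut_{s-1}(H), the vector x^{n+s} - x^n
   lies in H(0), so it is fixed by phi, and
     phi (psi (x^n y^s)) = phi (x^n y^s) + beta_psi(n) (x^{n+s} - x^n)
                         = x^n y^s + (beta_phi(n) + beta_psi(n)) (x^{n+s} - x^n);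
   comparing coefficients of x^{n+s} gives additivity of f_s. An element of
   Aut_{s-1}(H) fixes every x^n y^s exactly when f_s vanishes on it, and then
   it fixes all of H(0) + ... + H(s) by linearity. *)

Section LinearExtension.
Variables (k : fieldType) (K : choiceType) (V : lmodType k).

Definition lext (T : K -> V) (w : {malg k[K]}) : V :=
  \sum_(p <- msupp w) w@_p *: T p.

Lemma lext_fsub T (d : {fset K}) w : (msupp w `<=` d)%fset ->
  lext T w = \sum_(p <- d) w@_p *: T p.
Proof.
move=> le; rewrite /lext [LHS](big_fset_incl _ le) => //= x _ /mcoeff_outdom ->.
by rewrite scale0r.
Qed.

Lemma lextD T u v : lext T (u + v) = lext T u + lext T v.
Proof.
set E := (msupp u `|` msupp v `|` msupp (u + v))%fset.
rewrite (@lext_fsub T E u) ?(@lext_fsub T E v) ?(@lext_fsub T E (u + v)).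
- by rewrite -big_split; apply/eq_bigr=> p _; rewrite mcoeffD scalerDl.
- exact: fsubsetUr.
- by rewrite /E fsetUC fsetUA fsubsetUr.
- by rewrite /E -fsetUA fsubsetUl.
Qed.

Lemma lextZ T (c : k) u : lext T (c *: u) = c *: lext T u.
Proof.
rewrite (lext_fsub T (msuppZ_le c u)) /lext scaler_sumr.
by apply/eq_bigr=> p _; rewrite mcoeffZ scalerA.
Qed.

Lemma lextU T (c : k) p : lext T << c *g p >> = c *: T p.
Proof. by rewrite (lext_fsub T msuppU_le) big_seq_fset1 mcoeffUU. Qed.

Lemma eq_lext T1 T2 w : T1 =1 T2 -> lext T1 w = lext T2 w.
Proof. by move=> e; apply/eq_bigr=> p _; rewrite e. Qed.

End LinearExtension.

Lemma malgUZ (k : fieldType) (K : choiceType) (c : k) (p : K) :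
  << c *g p >> = c *: (<< p >> : {malg k[K]}).
Proof. by apply/malgP => x; rewrite mcoeffZ !mcoeffU mulr_natr. Qed.

Lemma lext_malgU (k : fieldType) (K : choiceType) (w : {malg k[K]}) :
  lext (fun p => << p >>) w = w.
Proof. by rewrite [RHS]monalgE; apply/eq_bigr => p _; rewrite malgUZ. Qed.

Lemma lext_swap (k : fieldType) (K1 K2 : choiceType) (V : lmodType k)
  (X : K1 -> K2 -> V) u w :
  lext (fun b => lext (X^~ b) u) w = lext (fun a => lext (X a) w) u.
Proof.
rewrite /lext; under eq_bigr do rewrite scaler_sumr.
rewrite exchange_big /=; apply/eq_bigr => a _; rewrite scaler_sumr.
by apply/eq_bigr => b _; rewrite !scalerA mulrC.
Qed.

Section AdditiveScalableMap.
Variables (k : fieldType) (V W : lmodType k) (F : V -> W).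
Hypotheses (FD : forall u v, F (u + v) = F u + F v)
           (FZ : forall (a : k) u, F (a *: u) = a *: F u).

Lemma map_lext (K : choiceType) (T : K -> V) w :
  F (lext T w) = lext (F \o T) w.
Proof.
have F0 : F 0 = 0 by rewrite -(scale0r (0 : V)) FZ scale0r.
by rewrite /lext (big_morph F FD F0); apply/eq_bigr => p _; rewrite FZ.
Qed.

End AdditiveScalableMap.

Lemma lext_map_malgU (k : fieldType) (K : choiceType) (V : lmodType k)
    (F : {malg k[K]} -> V) :
  (forall u v, F (u + v) = F u + F v) ->
  (forall (a : k) u, F (a *: u) = a *: F u) ->
  forall w, F w = lext (fun p => F << p >>) w.
Proof. by move=> FD FZ w; rewrite -{1}(lext_malgU w) (map_lext FD FZ). Qed.

Lemma tens_lext (k : fieldType) (u v : HH k) :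
  tens u v = lext (fun a => lext (fun b => (<< (a, b) >> : HT k)) v) u.
Proof.
rewrite /tens /lext; apply/eq_bigr => a _; rewrite scaler_sumr.
by apply/eq_bigr => b _; rewrite malgUZ scalerA.
Qed.

Lemma tens_lextl (k : fieldType) (K : choiceType) (T : K -> HH k) w (v : HH k) :
  tens (lext T w) v = lext (fun p => tens (T p) v) w.
Proof.
rewrite tens_lext (map_lext (lextD _) (lextZ _)).
by apply: eq_lext => p; rewrite /= tens_lext.
Qed.

Lemma tens_lextr (k : fieldType) (K : choiceType) (T : K -> HH k) w (u : HH k) :
  tens u (lext T w) = lext (fun p => tens u (T p)) w.
Proof.
rewrite tens_lext.
under eq_lext do rewrite (map_lext (lextD _) (lextZ _)).
by rewrite -lext_swap; apply: eq_lext => p; rewrite /= tens_lext.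
Qed.

Lemma tmapE (k : fieldType) (phi : HH k -> HH k) w :
  tmap phi w = lext (fun p => tens (phi << p.1 >>) (phi << p.2 >>)) w.
Proof. by []. Qed.

Section TensorSquare.
Variables (k : fieldType) (phi : HH k -> HH k).
Hypotheses (phiD : forall u v, phi (u + v) = phi u + phi v)
           (phiZ : forall (a : k) u, phi (a *: u) = a *: phi u).

Lemma tmap_tens (u v : HH k) : tmap phi (tens u v) = tens (phi u) (phi v).
Proof.
rewrite tmapE tens_lext (map_lext (lextD _) (lextZ _)).
rewrite (lext_map_malgU phiD phiZ u) (lext_map_malgU phiD phiZ v) tens_lextl.
apply: eq_lext => a; rewrite /= (map_lext (lextD _) (lextZ _)) tens_lextr.
by apply: eq_lext => b; rewrite /= lextU scale1r.
Qed.

Lemma tmap_comp (psi : HH k -> HH k) (w : HT k) :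
  tmap phi (tmap psi w) = tmap (phi \o psi) w.
Proof.
rewrite (tmapE psi) (tmapE phi) (map_lext (lextD _) (lextZ _)).
by apply: eq_lext => p; rewrite /= -tmapE tmap_tens.
Qed.

End TensorSquare.

Lemma is_coalg_aut_comp (k : fieldType) (q : k) phi psi :
  is_coalg_aut q phi -> is_coalg_aut q psi -> is_coalg_aut q (phi \o psi).
Proof.
case=> D1 Z1 B1 C1 E1 [D2 Z2 B2 C2 E2]; split => /=.
- by move=> u v; rewrite D2 D1.
- by move=> a u; rewrite Z2 Z1.
- exact: bij_comp.
- by move=> h; rewrite C1 C2 tmap_comp.
- by move=> h; rewrite E1 E2.
Qed.

Lemma is_Aut_m_comp (k : fieldType) (q : k) m phi psi :
  is_Aut_m q m phi -> is_Aut_m q m psi -> is_Aut_m q m (phi \o psi).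
Proof.
move=> [A1 F1] [A2 F2]; split; first exact: is_coalg_aut_comp.
by move=> h hh /=; rewrite F2 // F1.
Qed.

Lemma is_Aut_m_le (k : fieldType) (q : k) m m' phi :
  (m <= m')%N -> is_Aut_m q m' phi -> is_Aut_m q m phi.
Proof.
move=> le [A F]; split=> // h hh; apply: F => p /hh /leq_trans; exact.
Qed.

Lemma in_HleU (k : fieldType) m (p : int * nat) :
  (p.2 <= m)%N -> in_Hle m (<< p >> : HH k).
Proof. by move=> hp x; rewrite msuppU oner_eq0 inE => /eqP ->. Qed.

Lemma fix_in_Hle (k : fieldType) m (phi : HH k -> HH k) :
  (forall u v, phi (u + v) = phi u + phi v) ->
  (forall (a : k) u, phi (a *: u) = a *: phi u) ->
  (forall p, (p.2 <= m)%N -> phi << p >> = << p >>) ->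
  forall h, in_Hle m h -> phi h = h.
Proof.
move=> phiD phiZ fixU h hh; rewrite (lext_map_malgU phiD phiZ) -[RHS]lext_malgU.
by rewrite /lext !big_seq; apply: eq_bigr => p /hh /fixU ->.
Qed.

Definition xpow_diff (k : fieldType) (n : int) (s : nat) : HH k :=
  mono k (n + s%:Z) 0 - mono k n 0.

Lemma in_Hle_xpow_diff {k : fieldType} {m n s} : in_Hle m (xpow_diff k n s).
Proof.
move=> x /(fsubsetP (msuppB_le _ _)); rewrite inE /mono !msuppU !oner_eq0 !inE.
by case/orP => /eqP ->.
Qed.

Lemma mcoeff_xpow_diff (k : fieldType) n s : (0 < s)%N ->
  (xpow_diff k n s)@_(n + s%:Z, 0%N) = 1.
Proof.
move=> s_gt0; rewrite mcoeffB /mono !mcoeffU eqxx mulr1n.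
suff /negbTE -> : (n, 0%N) != (n + s%:Z, 0%N) by rewrite subr0.
apply: contraTneq s_gt0 => -[/eqP].
by rewrite -{1}[n]addr0 (inj_eq (addrI n)) eq_sym eqz_nat => /eqP ->.
Qed.

Lemma xpow_diff_scale_inj (k : fieldType) n s (x : HH k) (a b : k) : (0 < s)%N ->
  x + a *: xpow_diff k n s = x + b *: xpow_diff k n s -> a = b.
Proof.
move=> s_gt0 /addrI /(congr1 (mcoeff (n + s%:Z, 0%N))).
by rewrite !mcoeffZ mcoeff_xpow_diff // !mulr1.
Qed.

Section CoefficientMap.
Variables (k : fieldType) (q : k) (s : nat) (f : (HH k -> HH k) -> int -> k).
Hypothesis s_gt0 : (0 < s)%N.
Hypothesis fE : forall phi, is_Aut_m q s.-1 phi ->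
  forall n, phi (mono k n s) = mono k n s + f phi n *: xpow_diff k n s.

Lemma f_eq phi n b : is_Aut_m q s.-1 phi ->
  phi (mono k n s) = mono k n s + b *: xpow_diff k n s -> f phi n = b.
Proof. by move=> A; rewrite (fE A) => /(xpow_diff_scale_inj s_gt0). Qed.

Lemma f_comp phi psi : is_Aut_m q s.-1 phi -> is_Aut_m q s.-1 psi ->
  forall n, f (phi \o psi) n = f phi n + f psi n.
Proof.
move=> A1 A2 n; apply: f_eq; first exact: is_Aut_m_comp.
have [[phiD phiZ _ _ _] phi_fix] := A1.
rewrite /= (fE A2) phiD phiZ (fE A1) (phi_fix _ in_Hle_xpow_diff).
by rewrite -addrA -scalerDl.
Qed.

Lemma f_ker phi :
  (is_Aut_m q s.-1 phi /\ forall n, f phi n = 0) <-> is_Aut_m q s phi.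
Proof.
split=> [[A f0] | A].
- have [Ac phi_fix] := A; have [phiD phiZ _ _ _] := Ac; split=> //.
  apply: (fix_in_Hle phiD phiZ) => -[n m] /=.
  rewrite leq_eqVlt => /orP[/eqP-> | lt_ms].
    by rewrite -/(mono k n s) (fE A) f0 scale0r addr0.
  by apply: phi_fix; apply: in_HleU; rewrite /= -ltnS prednK.
- have As1 : is_Aut_m q s.-1 phi by apply: is_Aut_m_le A; exact: leq_pred.
  split=> // n; apply: f_eq => //.
  by rewrite scale0r addr0; apply: A.2; apply: in_HleU.
Qed.

End CoefficientMap.

Theorem lemma3p6 (k : fieldType) (q : k) (hq0 : q != 0)
  (hq : forall n : nat, (0 < n)%N -> q ^+ n != 1)
  (s : nat) (hs : (2 <= s)%N)
  (f : (HH k -> HH k) -> int -> k)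
  (hf : forall phi, is_Aut_m q s.-1 phi ->
        forall n : int,
          phi (mono k n s) =
          mono k n s + f phi n *: (mono k (n + s%:Z) 0 - mono k n 0)) :
  (forall phi psi, is_Aut_m q s.-1 phi -> is_Aut_m q s.-1 psi ->
     forall n : int, f (phi \o psi) n = f phi n + f psi n)
  /\
  (forall phi, (is_Aut_m q s.-1 phi /\ (forall n : int, f phi n = 0))
               <-> is_Aut_m q s phi).
Proof.
have s_gt0 : (0 < s)%N by apply: leq_trans hs.
split=> [phi psi | phi]; [exact: (f_comp s_gt0 hf) | exact: (f_ker s_gt0 hf)].
Qed.
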